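(* Let $G,H$ be real Hilbert spaces, $D\subset G$, and $\lambda_F,\lambda_f>0$. Let $F:G\to H$ be $\lambda_F$-UC on $D$ and let $f:H\to\mathbb{R}$ be $\lambda_f$-PL on $F(D)$. Then for all $x\in D$, \[ \tfrac12\|\nabla(f\circ F)(x)\|^2\ge \lambda_F\lambda_f\bigl((f\circ F)(x)-f_*\bigr), \] where $f_*=\inf_{h\in H}f(h)$.
   Context: For $F:G\to H$ between Hilbert spaces, $\partial F(x)\in\mathcal{L}(G,H)$ is the Fréchet derivative at $x$ and $\partial F(x)^*\in\mathcal{L}(H,G)$ its adjoint; for $f:H\to\mathbb{R}$, $\nabla f(x)\in H$ is the gradient. An operator $B\in\mathcal{L}(H,H)$ is $\lambda$-coercive ($\lambda>0$) if $\langle y,By\rangle\ge\lambda\|y\|^2$ for all $y\in H$. $F$ (differentiable on $D$) is $\lambda$-UC (uniformly conditioned) on $D$ if $\partial F(x)\circ\partial F(x)^*$ is $\lambda$-coercive for every $x\in D$. A function $f:H\to\mathbb{R}$ that is bounded below on $H$ and differentiable on a set $E$ is $\lambda$-PL (Polyak–Łojasiewicz) on $E$, $\lambda>0$, if $\tfrac12\|\nabla f(x)\|^2\ge\lambda(f(x)-f_* )$ for all $x\in E$, where $f_*=\inf_{h\in H}f(h)\in\mathbb{R}$. *)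

From HB Require Import structures.
From mathcomp Require Import all_boot all_order all_algebra.
From mathcomp Require Import all_classical all_reals all_analysis.
Set Implicit Arguments. Unset Strict Implicit. Unset Printing Implicit Defensive.
Import Order.TTheory GRing.Theory Num.Theory.
Import numFieldNormedType.Exports.
Local Open Scope classical_set_scope.
Local Open Scope ring_scope.

HB.mixin Record NormedModule_isInner (R : realType) V of NormedModule R V := {
  inner : V -> V -> R;
  innerC : forall x y : V, inner x y = inner y x;
  innerDl : forall (a : R) (x y z : V),
      inner (a *: x + y) z = a * inner x z + inner y z;
  inner_norm : forall x : V, inner x x = `|x| ^+ 2
}.

#[short(type="hilbertType")]
HB.structure Definition Hilbert (R : realType) :=
  { V of NormedModule_isInner R V & CompleteNormedModule R V }.

Section Defs.
Variable R : realType.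

Definition is_adjoint (G H : hilbertType R) (B : G -> H) (B' : H -> G) :=
  forall (g : G) (h : H), inner (B g) h = inner g (B' h).

(* The adjoint dF^* (unique when it exists; it always exists for bounded
   linear maps between Hilbert spaces by Riesz). *)
Definition adjoint (G H : hilbertType R) (B : G -> H) : H -> G :=
  get [set B' | is_adjoint B B'].

Definition is_gradient (H : hilbertType R) (f : H -> R^o) (x g : H) :=
  forall h : H, 'd f x h = inner g h.

Definition grad (H : hilbertType R) (f : H -> R^o) (x : H) : H :=
  get [set g | is_gradient f x g].

Definition coercive (H : hilbertType R) (lam : R) (B : H -> H) :=
  forall y : H, lam * `|y| ^+ 2 <= inner y (B y).

Definition UC (G H : hilbertType R) (lam : R) (F : G -> H) (D : set G) :=
  0 < lam /\
  (forall x, D x -> differentiable F x) /\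
  (forall x, D x -> coercive lam ('d F x \o adjoint ('d F x))).

Definition finf (H : hilbertType R) (f : H -> R^o) : R := inf (range f).

Definition PL (H : hilbertType R) (lam : R) (f : H -> R^o) (E : set H) :=
  0 < lam /\
  (exists m : R, forall h, m <= f h) /\
  (forall x, E x -> differentiable f x) /\
  (forall x, E x -> lam * (f x - finf f) <= 2^-1 * `|grad f x| ^+ 2).

End Defs.

(* By the chain rule and the definition of the adjoint,
   grad (f \o F) x = dF(x)^* g with g = grad f (F x), hence
   |dF(x)^* g|^2 = <g, dF(x) dF(x)^* g> >= lamF |g|^2
                 >= 2 lamF lamf (f (F x) - f_* ).
   Since [grad] and [adjoint] are defined by choice, the real work is to show
   that gradients and adjoints exist.  Both come from the Riesz representation
   theorem, proved in the classical way: the point u of minimal norm on the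
   closed hyperplane [phi = 1] (which exists by the parallelogram law and
   completeness) is orthogonal to [ker phi], so phi = <u / |u|^2, _>. *)

From HB Require Import structures.
From mathcomp Require Import all_boot all_order all_algebra.
From mathcomp Require Import all_classical all_reals all_analysis.
From mathcomp Require Import ring lra.
Import Order.TTheory GRing.Theory Num.Theory.
Import numFieldNormedType.Exports.
Set Implicit Arguments.
Unset Strict Implicit.
Unset Printing Implicit Defensive.
Local Open Scope classical_set_scope.
Local Open Scope ring_scope.

Lemma quadratic_ge0_linear_coef_eq0 (R : realFieldType) (a b : R) :
  (forall t, 0 <= t * a + t ^+ 2 * b) -> a = 0.
Proof.
(* evaluate at t = - a / (|b| + 1) *)
move=> ge0; pose s := (`|b| + 1)^-1.
have s0 : 0 < s by rewrite invr_gt0 ltr_wpDl.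
have sb : s * `|b| = 1 - s by rewrite /s; field; rewrite gt_eqF // ltr_wpDl.
have bs : a ^+ 2 * s ^+ 2 * b <= a ^+ 2 * s ^+ 2 * `|b|.
  by apply: ler_wpM2l; [rewrite mulr_ge0 ?sqr_ge0 | exact: ler_norm].
have bsE : a ^+ 2 * s ^+ 2 * `|b| = a ^+ 2 * s * (1 - s) by rewrite -sb; ring.
have := ge0 (- a * s) => qs.
have : a ^+ 2 * s ^+ 2 <= 0 by lra.
rewrite pmulr_lle0 ?exprn_gt0 // => a2.
by apply/eqP; rewrite -sqrf_eq0 eq_le a2 sqr_ge0.
Qed.

Section InnerProduct.
Context {R : realType} {V : hilbertType R}.
Implicit Types (a t : R) (u k x y z : V).

Definition innerl z x : R^o := inner x z.

HB.instance Definition _ z :=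
  GRing.isLinear.Build R V R^o *:%R (innerl z) (fun a x y => innerDl a x y z).

Lemma inner0l z : inner 0 z = 0. Proof. exact: linear0 (innerl z). Qed.
Lemma innerD x y z : inner (x + y) z = inner x z + inner y z.
Proof. exact: (linearD (innerl z) x y). Qed.
Lemma innerB x y z : inner (x - y) z = inner x z - inner y z.
Proof. exact: (linearB (innerl z) x y). Qed.
Lemma innerZ a x z : inner (a *: x) z = a * inner x z.
Proof. by rewrite -[a *: x]addr0 innerDl inner0l addr0. Qed.

Lemma innerDr x y z : inner z (x + y) = inner z x + inner z y.
Proof. by rewrite innerC innerD !(innerC z). Qed.
Lemma innerBr x y z : inner z (x - y) = inner z x - inner z y.
Proof. by rewrite innerC innerB !(innerC z). Qed.
Lemma innerZr a x z : inner z (a *: x) = a * inner z x.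
Proof. by rewrite innerC innerZ innerC. Qed.

Lemma inner_inj x y : (forall z, inner x z = inner y z) -> x = y.
Proof.
move=> xy; apply/eqP; rewrite -subr_eq0 -normr_eq0 -sqrf_eq0 -inner_norm.
by rewrite innerB xy subrr.
Qed.

Lemma normD2 x y : `|x + y| ^+ 2 = `|x| ^+ 2 + 2 * inner x y + `|y| ^+ 2.
Proof. by rewrite -!inner_norm innerD !innerDr (innerC y x); ring. Qed.

Lemma parallelogram x y :
  `|x + y| ^+ 2 + `|x - y| ^+ 2 = 2 * `|x| ^+ 2 + 2 * `|y| ^+ 2.
Proof. by rewrite !normD2 normrN -scaleN1r innerZr; ring. Qed.

Lemma innerl_continuous z : continuous (innerl z).
Proof.
(* polarization reduces continuity of the inner product to that of the norm *)
have -> : innerl z =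
    fun x => 2^-1 * (`|x + z| * `|x + z| - `|x| * `|x| - `|z| ^+ 2).
  by apply/funext => x; rewrite -!expr2 normD2 /innerl; field.
move=> x; apply: cvgM; first exact: cvg_cst.
apply: cvgB; last exact: cvg_cst.
have nx : `|y| @[y --> x] --> `|x| by apply: cvg_norm; exact: cvg_id.
have nxz : `|y + z| @[y --> x] --> `|x + z|.
  by apply: cvg_norm; apply: cvgD; [exact: cvg_id | exact: cvg_cst].
by apply: cvgB; apply: cvgM.
Qed.

Lemma midpoint_norm_bound (d : R) x y :
  d <= `|2^-1 *: (x + y)| ^+ 2 ->
  `|x - y| ^+ 2 <= 2 * `|x| ^+ 2 + 2 * `|y| ^+ 2 - 4 * d.
Proof.
have -> : `|2^-1 *: (x + y)| ^+ 2 = 4^-1 * `|x + y| ^+ 2.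
  by rewrite normrZ exprMn ger0_norm ?invr_ge0 //; congr (_ * _); field.
have := parallelogram x y; lra.
Qed.

Lemma min_norm_exists (C : set V) : C !=set0 -> closed C ->
    (forall x y, C x -> C y -> C (2^-1 *: (x + y))) ->
  exists2 u, C u & forall h, C h -> `|u| <= `|h|.
Proof.
move=> C0 Ccl Cmid.
pose S := [set `|h| ^+ 2 | h in C]; pose d := inf S.
have Sinf : has_inf S.
  split; first by case: C0 => h Ch; exists (`|h| ^+ 2), h.
  by exists 0 => _ [h _ <-]; rewrite sqr_ge0.
have dle h : C h -> d <= `|h| ^+ 2.
  by move=> Ch; apply: (ge_inf Sinf.2); exists h.
have /choice [hs hsP] :
    forall n : nat, exists h, C h /\ `|h| ^+ 2 < d + n.+1%:R^-1.
  move=> n; have n0 : 0 < n.+1%:R^-1 :> R by [].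
  by have [_ [h Ch <-] ?] := inf_adherent n0 Sinf; exists h.
have /cvg_ex [u hsu] : cvg (hs @ \oo).
  apply: cauchy_cvg; apply: cauchy_exP => e e0.
  have e40 : 0 < e ^+ 2 / 4 by rewrite divr_gt0 ?exprn_gt0.
  have [N _ NP] := near_infty_natSinv_lt (PosNum e40).
  exists (hs N); exists N => // n /= Nn.
  rewrite -ball_normE /ball_ /=.
  have [[CN hN] [Cn hn]] := (hsP N, hsP n).
  have := midpoint_norm_bound (dle _ (Cmid _ _ CN Cn)).
  have : n.+1%:R^-1 <= N.+1%:R^-1 :> R by rewrite lef_pV2 ?posrE // ler_nat.
  have : N.+1%:R^-1 < e ^+ 2 / 4 := NP N (leqnn N).
  move: hN hn; move: (N.+1%:R^-1) (n.+1%:R^-1) => rN rn *.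
  have : `|hs N - hs n| ^+ 2 < e ^+ 2 by lra.
  have := normr_ge0 (hs N - hs n); nra.
have Cu : C u.
  by apply: (closed_cvg _ Ccl _ _ hsu); apply: nearW => n; case: (hsP n).
have ud : `|u| ^+ 2 <= d.
  apply/ler_addgt0Pr => e e0; rewrite expr2.
  have hsu2 : `|hs n| * `|hs n| @[n --> \oo] --> `|u| * `|u|.
    by apply: cvgM; apply: cvg_norm.
  apply: (cvgr_to_le hsu2).
  have [N _ NP] := near_infty_natSinv_lt (PosNum e0).
  exists N => // n Nn /=; have [_] := hsP n; have : n.+1%:R^-1 < e := NP n Nn.
  rewrite -expr2; move: (n.+1%:R^-1) => r; lra.
exists u => // h Ch.
by rewrite -ler_sqr ?nnegrE // (le_trans ud (dle h Ch)).
Qed.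

Lemma min_norm_orthogonal u k :
  (forall t, `|u| <= `|u + t *: k|) -> inner u k = 0.
Proof.
move=> umin.
have : 2 * inner u k = 0.
  apply: (@quadratic_ge0_linear_coef_eq0 _ _ (`|k| ^+ 2)) => t.
  have := umin t; rewrite -ler_sqr ?nnegrE // normD2 innerZr normrZ exprMn.
  rewrite real_normK ?num_real //; lra.
lra.
Qed.

Lemma riesz_representation (phi : {linear V -> R^o}) :
  continuous phi -> exists g, forall h, phi h = inner g h.
Proof.
move=> phi_cont.
have [phi0|/existsNP [v /eqP phiv]] := pselect (forall h, phi h = 0).
  by exists 0 => h; rewrite phi0 inner0l.
have phiZ a x : phi (a *: x) = a * phi x by exact: linearZ.
pose C := phi @^-1` [set 1].
have C0 : C !=set0 by exists ((phi v)^-1 *: v); rewrite /C /= phiZ mulVf.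
have Ccl : closed C.
  by apply: preimage_closed => [x _|]; [exact: phi_cont | exact: closed_eq].
have Cmid x y : C x -> C y -> C (2^-1 *: (x + y)).
  by rewrite /C /= phiZ linearD => -> ->; field.
have [u Cu umin] := min_norm_exists C0 Ccl Cmid.
have u_orth k : phi k = 0 -> inner u k = 0.
  move=> phik; apply: min_norm_orthogonal => t; apply: umin.
  by rewrite /C /= linearD phiZ phik mulr0 addr0.
have uu : inner u u != 0.
  rewrite inner_norm sqrf_eq0 normr_eq0; apply/eqP => u0.
  by move: Cu; rewrite /C /= u0 linear0 => /eqP; rewrite eq_sym oner_eq0.
exists ((inner u u)^-1 *: u) => h.
have := u_orth (h - phi h *: u); rewrite linearB phiZ Cu mulr1 subrr.
move=> /(_ erefl) /eqP; rewrite innerBr innerZr subr_eq0 => /eqP uh.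
by rewrite innerZ uh mulrCA mulVf ?mulr1.
Qed.
End InnerProduct.

Section GradientAdjoint.
Context {R : realType}.

Lemma is_adjoint_adjoint (G H : hilbertType R) (L : {linear G -> H}) :
  continuous L -> is_adjoint L (adjoint L).
Proof.
move=> L_cont; apply: getPex.
have rep h : exists g, forall x, inner (L x) h = inner x g.
  have phi_cont : continuous (innerl h \o L).
    move=> x; apply: continuous_comp; first exact: L_cont.
    exact: innerl_continuous.
  have [g gP] := riesz_representation phi_cont.
  by exists g => x; rewrite (innerC x); exact: gP.
by have [A AP] := choice rep; exists A.
Qed.

Lemma is_gradient_grad (H : hilbertType R) (f : H -> R^o) x :
  differentiable f x -> is_gradient f x (grad f x).
Proof.
by move=> df; apply: getPex; exact: riesz_representation (diff_continuous df).
Qed.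

Lemma grad_val (H : hilbertType R) (f : H -> R^o) x g :
  is_gradient f x g -> grad f x = g.
Proof.
move=> fg; have fgrad : is_gradient f x (grad f x) := getPex (ex_intro _ g fg).
by apply: inner_inj => h; rewrite -fg -fgrad.
Qed.

Lemma grad_comp (G H : hilbertType R) (F : G -> H) (f : H -> R^o) x :
  differentiable F x -> differentiable f (F x) ->
  grad (f \o F) x = adjoint ('d F x) (grad f (F x)).
Proof.
move=> dF df; apply: grad_val => h.
rewrite diff_comp //= (is_gradient_grad df) innerC.
by rewrite (is_adjoint_adjoint (diff_continuous dF)) innerC.
Qed.

Lemma coercive_adjoint_norm (G H : hilbertType R) (L : G -> H) (A : H -> G)
    (lam : R) :
  is_adjoint L A -> coercive lam (L \o A) ->
  forall y, lam * `|y| ^+ 2 <= `|A y| ^+ 2.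
Proof. by move=> LA Lco y; have := Lco y; rewrite /= innerC LA inner_norm. Qed.
End GradientAdjoint.

Theorem lemma2 (R : realType) (G H : hilbertType R) (D : set G)
    (lamF lamf : R) (F : G -> H) (f : H -> R^o) :
  0 < lamF -> 0 < lamf ->
  UC lamF F D -> PL lamf f (F @` D) ->
  forall x, D x ->
    lamF * lamf * ((f \o F) x - finf f) <= 2^-1 * `|grad (f \o F) x| ^+ 2.
Proof.
move=> lamF_gt0 _ [_ [dF coerF]] [_ [_ [df PLf]]] x Dx.
have DFx : (F @` D) (F x) by exists x.
rewrite (grad_comp (dF x Dx) (df _ DFx)).
rewrite -mulrA; apply: le_trans (ler_wpM2l (ltW lamF_gt0) (PLf _ DFx)) _.
rewrite mulrCA ler_wpM2l ?invr_ge0 //.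
have dFx_adj := is_adjoint_adjoint (diff_continuous (dF x Dx)).
exact: coercive_adjoint_norm dFx_adj (coerF x Dx) _.
Qed.
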